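(* For $R>1$ define $\eta:[1,R]\to\mathbb R$ by \[ \eta(r)=\frac{1}{R^5-1}\left[(R^3-1)r^2+(R^2-1)\left(\frac{R}{r}\right)^3\right]. \] Then $\eta$ satisfies $\eta''+\frac2r\eta'-\frac6{r^2}\eta=0$ on $[1,R]$ with $\eta(1)=\eta(R)=1$. Moreover, there exists $R^*>1$ such that $\eta(r)\ge\frac23$ for all $1\le r\le R\le R^*$. *)

From Stdlib Require Import Reals.
From Coquelicot Require Import Coquelicot.
Open Scope R_scope.

Definition eta (Rr r : R) : R :=
  / (Rr ^ 5 - 1) * ((Rr ^ 3 - 1) * r ^ 2 + (Rr ^ 2 - 1) * (Rr / r) ^ 3).

(** Both summands of [eta Rr] solve the Euler equation [r^2 f'' + 2 r f' - 6 f = 0]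
    (indicial roots [2] and [-3]), and the coefficients are chosen so that
    [eta Rr 1 = eta Rr Rr = 1].  For the lower bound, [r^2 >= 1] and [(Rr/r)^3 >= 1]
    on [[1, Rr]], so [eta Rr r >= ((Rr^3 - 1) + (Rr^2 - 1)) / (Rr^5 - 1)], a ratio
    that tends to [(3 + 2) / 5 = 1] as [Rr] tends to [1]. *)

From Stdlib Require Import Reals Lra Lia Psatz.
From Coquelicot Require Import Coquelicot.
Open Scope R_scope.

Lemma pow_sub1_gt0 (x : R) (n : nat) : 1 < x -> (0 < n)%nat -> 0 < x ^ n - 1.
Proof. intros Hx Hn. generalize (Rlt_pow_R1 x n Hx Hn). lra. Qed.

Ltac solve_nonzero :=
  repeat apply Rmult_integral_contrapositive_currified; lra.

Section EtaEquation.

Variable Rr : R.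
Hypothesis HRr : 1 < Rr.

Let den_gt0 : 0 < Rr ^ 5 - 1 := pow_sub1_gt0 Rr 5 HRr ltac:(lia).

Definition eta_d1 (x : R) : R :=
  / (Rr ^ 5 - 1) * ((Rr ^ 3 - 1) * (2 * x) - 3 * (Rr ^ 2 - 1) * Rr ^ 3 / x ^ 4).

Definition eta_d2 (x : R) : R :=
  / (Rr ^ 5 - 1) * ((Rr ^ 3 - 1) * 2 + 12 * (Rr ^ 2 - 1) * Rr ^ 3 / x ^ 5).

Lemma is_derive_eta (x : R) : 0 < x -> is_derive (eta Rr) x (eta_d1 x).
Proof.
  intros Hx. unfold eta, eta_d1. auto_derive.
  - repeat split; solve_nonzero.
  - field; repeat split; solve_nonzero.
Qed.

Lemma is_derive_eta_d1 (x : R) : 0 < x -> is_derive eta_d1 x (eta_d2 x).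
Proof.
  intros Hx. unfold eta_d1, eta_d2. auto_derive.
  - repeat split; solve_nonzero.
  - field; repeat split; solve_nonzero.
Qed.

Lemma is_derive_Derive_eta (x : R) : 0 < x -> is_derive (Derive (eta Rr)) x (eta_d2 x).
Proof.
  intros Hx. apply (is_derive_ext_loc eta_d1); [| exact (is_derive_eta_d1 x Hx)].
  apply (filter_imp (fun u => 0 < u)); [| exact (open_gt 0 x Hx)].
  intros u Hu. symmetry. exact (is_derive_unique _ _ _ (is_derive_eta u Hu)).
Qed.

Lemma eta_euler_equation (r : R) : 0 < r ->
  ex_derive_n (eta Rr) 2 r /\
  Derive_n (eta Rr) 2 r + 2 / r * Derive (eta Rr) r - 6 / r ^ 2 * eta Rr r = 0.
Proof.
  intros Hr. pose proof (is_derive_Derive_eta r Hr) as Hd2. split.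
  - exists (eta_d2 r). exact Hd2.
  - change (Derive_n (eta Rr) 2 r) with (Derive (Derive (eta Rr)) r).
    rewrite (is_derive_unique _ _ _ Hd2), (is_derive_unique _ _ _ (is_derive_eta r Hr)).
    unfold eta_d2, eta_d1, eta. field; repeat split; solve_nonzero.
Qed.

Lemma eta_at_1 : eta Rr 1 = 1.
Proof. unfold eta. field. solve_nonzero. Qed.

Lemma eta_at_Rr : eta Rr Rr = 1.
Proof. unfold eta. field; repeat split; solve_nonzero. Qed.

Lemma eta_ge_boundary_ratio (r : R) : 1 <= r <= Rr ->
  ((Rr ^ 3 - 1) + (Rr ^ 2 - 1)) / (Rr ^ 5 - 1) <= eta Rr r.
Proof.
  intros [Hr1 HrR].
  pose proof (pow_sub1_gt0 Rr 2 HRr ltac:(lia)) as Hb.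
  pose proof (pow_sub1_gt0 Rr 3 HRr ltac:(lia)) as Ha.
  assert (Hr2 : 1 <= r ^ 2) by (rewrite <- (pow1 2); apply pow_incr; lra).
  assert (Hq : 1 <= (Rr / r) ^ 3).
  { rewrite <- (pow1 3). apply pow_incr. split; [lra |].
    apply (Rmult_le_reg_r r); [lra |]. unfold Rdiv. rewrite Rmult_assoc, Rinv_l; lra. }
  unfold eta, Rdiv at 1. rewrite Rmult_comm.
  apply Rmult_le_compat_l; [left; apply Rinv_0_lt_compat; exact den_gt0 | nra].
Qed.

End EtaEquation.

Lemma boundary_ratio_ge_2_3 (Rr : R) : 1 < Rr -> Rr <= 11 / 10 ->
  2 / 3 <= ((Rr ^ 3 - 1) + (Rr ^ 2 - 1)) / (Rr ^ 5 - 1).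
Proof.
  intros HR HRs. pose proof (pow_sub1_gt0 Rr 5 HR ltac:(lia)) as Hc.
  apply (Rmult_le_reg_r (Rr ^ 5 - 1)); [exact Hc |].
  unfold Rdiv at 2. rewrite Rmult_assoc, Rinv_l by lra.
  (* [2 Rr^5 - 3 Rr^3 - 3 Rr^2 + 4] has the simple root [1]; the cofactor is negative near [1]. *)
  assert (Hfactor : 2 * Rr ^ 5 - 3 * Rr ^ 3 - 3 * Rr ^ 2 + 4
                    = (Rr - 1) * (2 * Rr ^ 4 + 2 * Rr ^ 3 - Rr ^ 2 - 4 * Rr - 4)) by ring.
  assert (H4 : Rr ^ 4 <= (11 / 10) ^ 4) by (apply pow_incr; lra).
  assert (H3 : Rr ^ 3 <= (11 / 10) ^ 3) by (apply pow_incr; lra).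
  assert (2 * Rr ^ 4 + 2 * Rr ^ 3 - Rr ^ 2 - 4 * Rr - 4 < 0) by nra.
  nra.
Qed.

Theorem proposition3p1 :
  (forall Rr : R, 1 < Rr ->
     (forall r : R, 1 <= r <= Rr ->
        ex_derive_n (eta Rr) 2 r /\
        Derive_n (eta Rr) 2 r + 2 / r * Derive (eta Rr) r - 6 / r ^ 2 * eta Rr r = 0)
     /\ eta Rr 1 = 1 /\ eta Rr Rr = 1)
  /\
  (exists Rstar : R, 1 < Rstar /\
     forall Rr r : R, 1 < Rr -> 1 <= r -> r <= Rr -> Rr <= Rstar -> eta Rr r >= 2 / 3).
Proof.
  split.
  - intros Rr HR. split; [| split].
    + intros r [Hr1 _]. apply eta_euler_equation; lra.
    + exact (eta_at_1 Rr HR).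
    + exact (eta_at_Rr Rr HR).
  - exists (11 / 10). split; [lra |].
    intros Rr r HR Hr1 HrR HRs. apply Rle_ge.
    apply (Rle_trans _ _ _ (boundary_ratio_ge_2_3 Rr HR HRs)).
    apply eta_ge_boundary_ratio; lra.
Qed.
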